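(* Let $\beta>0$, $\alpha>2$, $N_o>0$, and $\eta(d)=\frac{1}{(1+d)^\alpha}$. (a) If $C,D>0$ satisfy $\dfrac{1+C}{C(2+D)}<\dfrac{1}{\tau\beta^{1/\alpha}}$, where $\tau=2\Big(\sum_{k=1}^\infty\frac{6}{k^{\alpha-1}}+\sum_{k=1}^\infty\frac{3}{k^\alpha}\Big)^{1/\alpha}$, then $(C,D)$ ensures SINR$_\beta$. (b) For any $C>0$ there exists $D>0$, depending on $\alpha,\beta,C$, such that $(C,D)$ ensures SINR$_\beta$. (c) There exists $D>0$, depending on $\alpha$ and $\beta$, such that $(C,D)$ ensures SINR$_\beta$ for all sufficiently large $C$.
   Context: $\mathrm{SINR}(t,r,T,P,N_o,\eta)=\dfrac{P\eta(\|t-r\|)}{N_o+\sum_{t'\in T}P\eta(\|t'-r\|)}$ for $t,r\in\mathbb{R}^2$, $T$ a finite subset of $\mathbb{R}^2$, $P>0$. $(t,r,T)$ satisfies DC$(C,D)$ if $\|t-r\|\le C$ and $\|t'-t''\|\ge C(2+D)$ for all distinct $t',t''\in T\cup\{t\}$. The pair $(C,D)$ ensures SINR$_\beta$ (given $N_o$ and $\eta$) if there exists $P>0$ such that every triple $(t,r,T)$ satisfying DC$(C,D)$ has $\mathrm{SINR}(t,r,T,P,N_o,\eta)\ge\beta$. *)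

From Stdlib Require Import Reals Lra List.
From Coquelicot Require Import Coquelicot.
Open Scope R_scope.

Definition pt := (R * R)%type.
Definition dist2 (p q : pt) : R :=
  sqrt ((fst p - fst q) ^ 2 + (snd p - snd q) ^ 2).

(* Finite sets of transmitters are represented by duplicate-free lists. *)
Definition interference (T : list pt) (r : pt) (P : R) (eta : R -> R) : R :=
  fold_right (fun t' acc => P * eta (dist2 t' r) + acc) 0 T.

Definition SINR (t r : pt) (T : list pt) (P No : R) (eta : R -> R) : R :=
  P * eta (dist2 t r) / (No + interference T r P eta).

Definition DC (C D : R) (t r : pt) (T : list pt) : Prop :=
  dist2 t r <= C /\
  forall u v, In u (t :: T) -> In v (t :: T) -> u <> v -> dist2 u v >= C * (2 + D).

(* (C,D) ensures SINR_beta (given No and eta); triples range over finite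
   sets T of other transmitters (t not in T). *)
Definition ensures_SINR (C D beta No : R) (eta : R -> R) : Prop :=
  exists P, P > 0 /\
    forall (t r : pt) (T : list pt), NoDup (t :: T) -> DC C D t r T ->
      SINR t r T P No eta >= beta.

Definition eta_alpha (alpha : R) (d : R) : R := / Rpower (1 + d) alpha.

Definition tau (alpha : R) : R :=
  2 * Rpower (Series (fun n : nat => 6 / Rpower (INR (S n)) (alpha - 1))
              + Series (fun n : nat => 3 / Rpower (INR (S n)) alpha)) (1 / alpha).

(* Write s = C (2 + D). The transmitters of T are s-separated and, as t is
   within C of r, each lies farther than s - C > s/2 from r. Cutting the plane
   into a grid of mesh s / sqrt 2 shows that at most 3 m^2 - 3 of them lie
   within distance m s/2 of r (m >= 2). Summation by parts against the
   decreasing kernel then bounds the total interference by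
   (2/s)^alpha * sum_k (6/k^(alpha-1) + 3/k^alpha), and the hypothesis on tau
   says precisely that beta times this bound is below the weakest possible
   signal (1 + C)^(-alpha); a large enough power P then absorbs the noise. *)

From Stdlib Require Import Reals List Lra Lia Psatz ZArith.
From Coquelicot Require Import Coquelicot.
Open Scope R_scope.

Definition sumR (l : list R) : R := fold_right Rplus 0 l.

Lemma sumR_map_le {A} (f g : A -> R) (l : list A) :
  (forall x, In x l -> f x <= g x) -> sumR (map f l) <= sumR (map g l).
Proof.
  induction l as [|a l IH]; intros Hfg; simpl; [lra|].
  apply Rplus_le_compat; [apply Hfg; left | apply IH; intros; apply Hfg; right]; auto.
Qed.

Lemma sumR_map_nonneg {A} (f : A -> R) (l : list A) :
  (forall x, In x l -> 0 <= f x) -> 0 <= sumR (map f l).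
Proof.
  induction l as [|a l IH]; intros Hf; simpl; [lra|].
  apply Rplus_le_le_0_compat; [apply Hf; left | apply IH; intros; apply Hf; right]; auto.
Qed.

Lemma sumR_map_filter {A} (g : A -> R) (f : A -> bool) (l : list A) :
  sumR (map g l) = sumR (map g (filter f l)) + sumR (map g (filter (fun x => negb (f x)) l)).
Proof. induction l as [|a l IH]; simpl; [lra|]. destruct (f a); simpl; rewrite IH; lra. Qed.

Lemma sumR_map_const {A} (g : A -> R) (a : A) (l : list A) :
  (forall x, In x l -> x = a) -> sumR (map g l) = INR (length l) * g a.
Proof.
  induction l as [|b l IH]; intros Hl; [simpl; lra|].
  change (sumR (map g (b :: l))) with (g b + sumR (map g l)).
  rewrite (Hl b (or_introl eq_refl)), IH by (intros; apply Hl; right; auto).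
  cbn [length]. rewrite S_INR. lra.
Qed.

Definition count_le (m : nat) (ks : list nat) : nat := length (filter (fun k => k <=? m) ks).

Lemma count_le_all (m : nat) (ks : list nat) :
  (forall k, In k ks -> (k <= m)%nat) -> count_le m ks = length ks.
Proof.
  intros Hks. unfold count_le. rewrite forallb_filter_id; auto.
  apply forallb_forall. intros k Hk. apply Nat.leb_le; auto.
Qed.

Lemma count_le_filter (f : nat -> bool) (m : nat) (ks : list nat) :
  (count_le m (filter f ks) <= count_le m ks)%nat.
Proof. induction ks as [|a ks IH]; simpl; [lia|]. unfold count_le in *.
  destruct (f a); simpl; destruct (a <=? m); simpl; lia. Qed.

Section WeightedCounting.

Variables c g : nat -> R.
Hypothesis g_nonneg : forall k, 0 <= g k.
Hypothesis g_nonincreasing : forall k, g (S k) <= g k.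

(* The slack term, the unused capacity up to level K weighted by g K, is what
   makes the induction on K go through. *)
Lemma sumR_map_capacity_slack (K : nat) (ks : list nat) :
  (forall k, In k ks -> (k <= K)%nat) ->
  (forall m, INR (count_le m ks) <= sum_n c m) ->
  sumR (map g ks) + (sum_n c K - INR (length ks)) * g K <= sum_n (fun k => c k * g k) K.
Proof.
  revert ks; induction K as [|K IH]; intros ks Hks Hcount.
  - rewrite (sumR_map_const g 0%nat) by (intros k Hk; specialize (Hks k Hk); lia).
    rewrite !sum_O. lra.
  - set (low := filter (fun k => k <=? K) ks).
    set (top := filter (fun k => negb (k <=? K)) ks).
    assert (Hlow : forall k, In k low -> (k <= K)%nat).
    { intros k Hk. apply filter_In in Hk. apply Nat.leb_le, Hk. }
    assert (Htop : forall k, In k top -> k = S K).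
    { intros k Hk. apply filter_In in Hk as [Hk Hgt].
      apply Bool.negb_true_iff, Nat.leb_gt in Hgt. specialize (Hks k Hk). lia. }
    assert (Hlow_count : forall m, INR (count_le m low) <= sum_n c m).
    { intros m. eapply Rle_trans; [apply le_INR, count_le_filter | apply Hcount]. }
    assert (Hlow_len : INR (length low) <= sum_n c K).
    { rewrite <- (count_le_all K low Hlow). apply Hlow_count. }
    specialize (IH low Hlow Hlow_count).
    rewrite (sumR_map_filter g (fun k => k <=? K)), <- (filter_length (fun k => k <=? K) ks).
    fold low top. rewrite (sumR_map_const g (S K) top Htop), plus_INR, !sum_Sn.
    change plus with Rplus.
    assert (Hmono : (sum_n c K - INR (length low)) * g (S K)
                    <= (sum_n c K - INR (length low)) * g K).
    { apply Rmult_le_compat_l; [lra | apply g_nonincreasing]. }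
    lra.
Qed.

(* Summation by parts: filling every level k to its capacity c k can only
   increase the sum of the nonincreasing g. *)
Lemma sumR_map_le_capacity (K : nat) (ks : list nat) :
  (forall k, In k ks -> (k <= K)%nat) ->
  (forall m, INR (count_le m ks) <= sum_n c m) ->
  sumR (map g ks) <= sum_n (fun k => c k * g k) K.
Proof.
  intros Hks Hcount.
  assert (Hslack := sumR_map_capacity_slack K ks Hks Hcount).
  assert (Hlen : INR (length ks) <= sum_n c K).
  { rewrite <- (count_le_all K ks Hks). apply Hcount. }
  assert (0 <= (sum_n c K - INR (length ks)) * g K) by (apply Rmult_le_pos; [lra | apply g_nonneg]).
  lra.
Qed.

End WeightedCounting.

Lemma dist2_norm (p q : pt) : dist2 p q = norm (minus p q).
Proof.
  destruct p as [x1 y1], q as [x2 y2]; unfold dist2; cbn [fst snd].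
  rewrite <- (pow2_abs (x1 - x2)), <- (pow2_abs (y1 - y2)). reflexivity.
Qed.

Lemma dist2_triangle (p q r : pt) : dist2 p r <= dist2 p q + dist2 q r.
Proof.
  rewrite !dist2_norm, (minus_trans q).
  exact (@norm_triangle R_AbsRing (prod_NormedModule R_AbsRing R_NormedModule R_NormedModule) _ _).
Qed.

Lemma dist2_sym (p q : pt) : dist2 p q = dist2 q p.
Proof. unfold dist2. f_equal. ring. Qed.

Lemma dist2_nonneg (p q : pt) : 0 <= dist2 p q.
Proof. apply sqrt_pos. Qed.

Lemma dist2_sqr (p q : pt) : dist2 p q ^ 2 = (fst p - fst q) ^ 2 + (snd p - snd q) ^ 2.
Proof. apply pow2_sqrt, Rplus_le_le_0_compat; apply pow2_ge_0. Qed.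

(* Cell (i, j) of the grid of mesh h centred at r is the square of side h
   centred at r + (i h, j h); a point in it at offset (x, y) from r has
   cell_weight i + cell_weight j <= 4 (x^2 + y^2) / h^2. *)
Definition cell_weight (i : Z) : Z := if (i =? 0)%Z then 0%Z else ((2 * Z.abs i - 1) ^ 2)%Z.

Definition grid_range (M : Z) : list Z :=
  map (fun k => (Z.of_nat k - M)%Z) (seq 0 (Z.to_nat (2 * M + 1))).

Definition grid_box (M : Z) : list (Z * Z) := list_prod (grid_range M) (grid_range M).

Definition light_cells (m : nat) : list (Z * Z) :=
  filter (fun c => (cell_weight (fst c) + cell_weight (snd c) <? 2 * Z.of_nat m * Z.of_nat m)%Z)
    (grid_box (Z.of_nat m)).

Lemma in_grid_range (M i : Z) : (- M <= i <= M)%Z -> In i (grid_range M).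
Proof.
  intros Hi. apply in_map_iff. exists (Z.to_nat (i + M)).
  split; [rewrite Z2Nat.id by lia; lia | apply in_seq; lia].
Qed.

Lemma length_grid_box (M : Z) :
  length (grid_box M) = (Z.to_nat (2 * M + 1) * Z.to_nat (2 * M + 1))%nat.
Proof. unfold grid_box, grid_range. rewrite length_prod, length_map, length_seq. reflexivity. Qed.

Lemma cell_weight_nonneg (i : Z) : (0 <= cell_weight i)%Z.
Proof. unfold cell_weight. destruct (i =? 0)%Z; lia. Qed.

Lemma cell_weight_index_bound (i M : Z) :
  (0 <= M)%Z -> (cell_weight i < 2 * M * M)%Z -> (- M <= i <= M)%Z.
Proof.
  unfold cell_weight. intros HM Hw. destruct (Z.eqb_spec i 0); [lia|].
  destruct (Z.le_gt_cases (Z.abs i) M); [lia|].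
  assert (((2 * M + 1) ^ 2 <= (2 * Z.abs i - 1) ^ 2)%Z) by (apply Z.pow_le_mono_l; lia).
  nia.
Qed.

Lemma cell_weight_index_bound_large (i m K : Z) :
  (12 <= m)%Z -> (3 * m < 4 * K + 4)%Z -> (cell_weight i < 2 * m * m)%Z -> (- K <= i <= K)%Z.
Proof.
  unfold cell_weight. intros Hm HK Hw. destruct (Z.eqb_spec i 0); [lia|].
  destruct (Z.le_gt_cases (Z.abs i) K); [lia|].
  assert (((3 * m - 1) ^ 2 <= (2 * (2 * Z.abs i - 1)) ^ 2)%Z) by (apply Z.pow_le_mono_l; lia).
  nia.
Qed.

Lemma length_light_cells_small (m : nat) :
  (2 <= m <= 11)%nat -> (length (light_cells m) <= 3 * m * m - 3)%nat.
Proof.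
  assert (Hcheck : forallb (fun m => length (light_cells m) <=? 3 * m * m - 3) (seq 2 10) = true)
    by (vm_compute; reflexivity).
  intros Hm. rewrite forallb_forall in Hcheck.
  apply Nat.leb_le, Hcheck, in_seq. lia.
Qed.

(* For m <= 11 the light cells are counted by computation; for m >= 12 they
   all lie in the box of half-side 3m/4 (as sqrt 2 / 2 < 3/4), which has at
   most 3 m^2 - 3 cells. *)
Lemma light_cells_cover (m : nat) : (2 <= m)%nat ->
  exists L : list (Z * Z), (length L <= 3 * m * m - 3)%nat /\
    forall i j, (cell_weight i + cell_weight j < 2 * Z.of_nat m * Z.of_nat m)%Z -> In (i, j) L.
Proof.
  intros Hm.
  destruct (Nat.le_gt_cases m 11) as [Hsmall | Hlarge].
  - exists (light_cells m). split; [apply length_light_cells_small; lia|].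
    intros i j Hij. apply filter_In. split; [|apply Z.ltb_lt; auto].
    assert (Hi := cell_weight_nonneg i). assert (Hj := cell_weight_nonneg j).
    apply in_prod; apply in_grid_range, (cell_weight_index_bound _ (Z.of_nat m)); lia.
  - set (K := (3 * Z.of_nat m / 4)%Z).
    assert (HK : (4 * K <= 3 * Z.of_nat m < 4 * K + 4)%Z).
    { assert (Hmod := Z.mod_pos_bound (3 * Z.of_nat m) 4 ltac:(lia)).
      assert (Hdiv := Z.div_mod (3 * Z.of_nat m) 4 ltac:(lia)). unfold K. lia. }
    exists (grid_box K). split.
    + rewrite length_grid_box. apply Nat2Z.inj_le.
      rewrite Nat2Z.inj_mul, Z2Nat.id, Nat2Z.inj_sub, !Nat2Z.inj_mul by nia. nia.
    + intros i j Hij.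
      assert (Hi := cell_weight_nonneg i). assert (Hj := cell_weight_nonneg j).
      apply in_prod; apply in_grid_range, (cell_weight_index_bound_large _ (Z.of_nat m)); lia.
Qed.

Definition cell (r : pt) (h : R) (p : pt) : Z * Z :=
  (Int_part ((fst p - fst r) / h + / 2), Int_part ((snd p - snd r) / h + / 2)).

Lemma cell_weight_le (u : R) : IZR (cell_weight (Int_part (u + / 2))) <= 4 * u ^ 2.
Proof.
  destruct (base_Int_part (u + / 2)) as [Hlo Hhi].
  unfold cell_weight. set (i := Int_part (u + / 2)) in *.
  destruct (Z.eqb_spec i 0); [simpl; nra|].
  rewrite Z.pow_2_r, mult_IZR, minus_IZR, mult_IZR, abs_IZR.
  destruct (Z.le_gt_cases 0 i).
  - assert (1 <= IZR i) by (apply IZR_le; lia). rewrite Rabs_right by lra. nra.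
  - assert (IZR i <= -1) by (apply IZR_le; lia). rewrite Rabs_left by lra. nra.
Qed.

Lemma Int_part_eq_close (a b : R) : Int_part a = Int_part b -> (a - b) ^ 2 < 1.
Proof.
  intros E. destruct (base_Int_part a), (base_Int_part b). rewrite E in *. nra.
Qed.

Lemma same_cell_dist (r : pt) (h : R) (p q : pt) :
  0 < h -> cell r h p = cell r h q -> dist2 p q ^ 2 < 2 * h ^ 2.
Proof.
  intros Hh E. injection E as Ex Ey.
  apply Int_part_eq_close in Ex, Ey. rewrite dist2_sqr.
  replace ((fst p - fst r) / h + / 2 - ((fst q - fst r) / h + / 2))
    with ((fst p - fst q) / h) in Ex by (field; lra).
  replace ((snd p - snd r) / h + / 2 - ((snd q - snd r) / h + / 2))
    with ((snd p - snd q) / h) in Ey by (field; lra).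
  replace (fst p - fst q) with ((fst p - fst q) / h * h) by (field; lra).
  replace (snd p - snd q) with ((snd p - snd q) / h * h) by (field; lra).
  set (a := (fst p - fst q) / h) in *. set (b := (snd p - snd q) / h) in *.
  assert (0 < h ^ 2) by nra.
  replace ((a * h) ^ 2 + (b * h) ^ 2) with ((a ^ 2 + b ^ 2) * h ^ 2) by ring.
  nra.
Qed.

Lemma cell_weight_dist (r : pt) (h : R) (p : pt) : 0 < h ->
  IZR (cell_weight (fst (cell r h p)) + cell_weight (snd (cell r h p))) * h ^ 2
  <= 4 * dist2 p r ^ 2.
Proof.
  intros Hh. unfold cell; cbn [fst snd]. rewrite plus_IZR, dist2_sqr.
  assert (Hx := cell_weight_le ((fst p - fst r) / h)).
  assert (Hy := cell_weight_le ((snd p - snd r) / h)).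
  replace (4 * ((fst p - fst r) ^ 2 + (snd p - snd r) ^ 2))
    with ((4 * ((fst p - fst r) / h) ^ 2 + 4 * ((snd p - snd r) / h) ^ 2) * h ^ 2) by (field; lra).
  apply Rmult_le_compat_r; nra.
Qed.

Lemma pt_eq_dec (p q : pt) : {p = q} + {p <> q}.
Proof. decide equality; apply Req_EM_T. Qed.

Definition separated (s : R) (L : list pt) : Prop :=
  forall u v, In u L -> In v L -> u <> v -> s <= dist2 u v.

(* Grid of mesh s / sqrt 2: distinct points of L lie in distinct cells, and
   the points of the disc lie in light cells. *)
Lemma separated_disc_packing (r : pt) (s : R) (m : nat) (L : list pt) :
  0 < s -> (2 <= m)%nat -> NoDup L -> separated s L ->
  (forall p, In p L -> dist2 p r < INR m * s / 2) ->
  (length L <= 3 * m * m - 3)%nat.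
Proof.
  intros Hs Hm Hnd Hsep Hdisc.
  set (h := s / sqrt 2).
  assert (Hh : 0 < h) by (apply Rdiv_lt_0_compat; [lra | apply sqrt_lt_R0; lra]).
  assert (Hh2 : 2 * h ^ 2 = s ^ 2).
  { unfold h, Rdiv. rewrite Rpow_mult_distr, pow_inv, pow2_sqrt by lra. field. }
  destruct (light_cells_cover m Hm) as [cells [Hcells Hcover]].
  eapply Nat.le_trans; [|exact Hcells].
  rewrite <- (length_map (cell r h)).
  apply NoDup_incl_length.
  - apply NoDup_map_NoDup_ForallPairs; auto.
    intros p q Hp Hq Hpq.
    destruct (pt_eq_dec p q) as [|Hne]; auto. exfalso.
    assert (Hclose := same_cell_dist r h p q Hh Hpq).
    assert (Hfar := Hsep p q Hp Hq Hne). assert (Hd := dist2_nonneg p q). nra.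
  - intros c Hc. apply in_map_iff in Hc as [p [<- Hp]].
    rewrite (surjective_pairing (cell r h p)). apply Hcover, lt_IZR.
    rewrite plus_IZR, !mult_IZR, <- INR_IZR_INZ.
    assert (Hw := cell_weight_dist r h p Hh).
    assert (Hd := Hdisc p Hp). assert (Hd0 := dist2_nonneg p r). assert (Hm0 := pos_INR m).
    assert (Hsq : 4 * dist2 p r ^ 2 < INR m ^ 2 * s ^ 2) by nra.
    rewrite <- plus_IZR in *. nra.
Qed.

Lemma Rpower_pos (x y : R) : 0 < Rpower x y.
Proof. apply exp_pos. Qed.

Lemma Rpower_1_l (y : R) : Rpower 1 y = 1.
Proof. unfold Rpower. rewrite ln_1, Rmult_0_r. apply exp_0. Qed.

Lemma ln_le_sub_1 (z : R) : 0 < z -> ln z <= z - 1.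
Proof. intros Hz. assert (H := exp_ineq1_le (ln z)). rewrite exp_ln in H; lra. Qed.

(* Convexity of y |-> y^(-q), in the form needed to telescope the p-series. *)
Lemma Rpower_telescope_ge (q x : R) : 0 < q -> 1 < x ->
  q / Rpower x (q + 1) <= Rpower (x - 1) (- q) - Rpower x (- q).
Proof.
  intros Hq Hx. unfold Rpower.
  set (e := exp (- q * ln x)).
  assert (He : 0 < e) by apply exp_pos.
  assert (Hgap : / x <= ln x - ln (x - 1)).
  { assert (H := ln_le_sub_1 ((x - 1) / x) ltac:(apply Rdiv_lt_0_compat; lra)).
    rewrite ln_div in H by lra.
    replace ((x - 1) / x - 1) with (- / x) in H by (field; lra). lra. }
  assert (Hlhs : q / exp ((q + 1) * ln x) = q / x * e).
  { unfold e. replace ((q + 1) * ln x) with (- (- q * ln x) + ln x) by ring.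
    rewrite exp_plus, exp_Ropp, exp_ln by lra.
    field. split; [lra | apply Rgt_not_eq, exp_pos]. }
  assert (Hrhs : exp (- q * ln (x - 1)) = e * exp (q * (ln x - ln (x - 1)))).
  { unfold e. rewrite <- exp_plus. f_equal. ring. }
  assert (Hexp := exp_ineq1_le (q * (ln x - ln (x - 1)))).
  assert (Hq_gap : q / x <= q * (ln x - ln (x - 1))) by (apply Rmult_le_compat_l; lra).
  rewrite Hlhs, Hrhs. fold e. nra.
Qed.

Definition zeta_term (p : R) (n : nat) : R := / Rpower (INR (S n)) p.

Lemma zeta_term_pos (p : R) (n : nat) : 0 < zeta_term p n.
Proof. apply Rinv_0_lt_compat, Rpower_pos. Qed.

Lemma sum_zeta_term_le (p : R) (N : nat) : 1 < p ->
  sum_n (zeta_term p) N <= 1 + / (p - 1) * (1 - Rpower (INR (S N)) (- (p - 1))).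
Proof.
  intros Hp. induction N as [|N IH].
  - rewrite sum_O. unfold zeta_term. simpl INR. rewrite !Rpower_1_l. lra.
  - rewrite sum_Sn. change plus with Rplus.
    assert (Hstep := Rpower_telescope_ge (p - 1) (INR (S (S N))) ltac:(lra)
                       ltac:(rewrite !S_INR; pose proof (pos_INR N); lra)).
    replace (p - 1 + 1) with p in Hstep by ring.
    replace (INR (S (S N)) - 1) with (INR (S N)) in Hstep by (rewrite (S_INR (S N)); ring).
    unfold zeta_term at 2.
    replace (/ Rpower (INR (S (S N))) p)
      with (/ (p - 1) * ((p - 1) / Rpower (INR (S (S N))) p))
      by (field; split; [apply Rgt_not_eq, Rpower_pos | lra]).
    assert (Hinv : 0 < / (p - 1)) by (apply Rinv_0_lt_compat; lra).
    nra.
Qed.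

Lemma ex_series_zeta_term (p : R) : 1 < p -> ex_series (zeta_term p).
Proof.
  intros Hp.
  assert (Hlim : ex_finite_lim_seq (sum_n (zeta_term p))).
  { apply ex_finite_lim_seq_incr with (1 + / (p - 1)).
    - intros n. rewrite sum_Sn. change plus with Rplus.
      pose proof (zeta_term_pos p (S n)). lra.
    - intros n. assert (H := sum_zeta_term_le p n Hp).
      assert (0 < Rpower (INR (S n)) (- (p - 1))) by apply Rpower_pos.
      assert (0 < / (p - 1)) by (apply Rinv_0_lt_compat; lra). nra. }
  destruct Hlim as [l Hl]. exists l. exact Hl.
Qed.

Lemma sum_n_le_Series (a : nat -> R) (N : nat) :
  (forall n, 0 <= a n) -> ex_series a -> sum_n a N <= Series a.
Proof.
  intros Ha Hex. apply is_lim_seq_incr_compare; [apply Series_correct, Hex|].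
  intros n. rewrite sum_Sn. change plus with Rplus. specialize (Ha (S n)). lra.
Qed.

Definition tau_term (alpha : R) (n : nat) : R :=
  6 / Rpower (INR (S n)) (alpha - 1) + 3 / Rpower (INR (S n)) alpha.

Lemma tau_term_pos (alpha : R) (n : nat) : 0 < tau_term alpha n.
Proof.
  unfold tau_term. pose proof (Rpower_pos (INR (S n)) (alpha - 1)).
  pose proof (Rpower_pos (INR (S n)) alpha).
  apply Rplus_lt_0_compat; apply Rdiv_lt_0_compat; lra.
Qed.

Lemma ex_series_scaled_zeta (c p : R) : 1 < p -> ex_series (fun n => c / Rpower (INR (S n)) p).
Proof.
  intros Hp. apply (ex_series_ext (fun n => scal c (zeta_term p n))); [reflexivity|].
  apply (@ex_series_scal_l R_AbsRing R_NormedModule), ex_series_zeta_term, Hp.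
Qed.

Lemma ex_series_tau_term (alpha : R) : 2 < alpha -> ex_series (tau_term alpha).
Proof.
  intros Halpha.
  apply (ex_series_plus (fun n => 6 / Rpower (INR (S n)) (alpha - 1))
                        (fun n => 3 / Rpower (INR (S n)) alpha));
    apply ex_series_scaled_zeta; lra.
Qed.

Lemma tau_Series (alpha : R) : 2 < alpha ->
  tau alpha = 2 * Rpower (Series (tau_term alpha)) (1 / alpha).
Proof.
  intros Halpha. unfold tau, tau_term. rewrite Series_plus; auto;
    apply ex_series_scaled_zeta; lra.
Qed.

Lemma Series_tau_term_pos (alpha : R) : 2 < alpha -> 0 < Series (tau_term alpha).
Proof.
  intros Halpha. eapply Rlt_le_trans; [apply (tau_term_pos alpha 0)|].
  rewrite <- sum_O. apply sum_n_le_Series; [intros n; left; apply tau_term_pos|].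
  apply ex_series_tau_term, Halpha.
Qed.

Definition nat_floor (x : R) : nat := Z.to_nat (Int_part x).

Lemma nat_floor_spec (x : R) : 0 <= x -> INR (nat_floor x) <= x < INR (nat_floor x) + 1.
Proof.
  intros Hx. destruct (base_Int_part x) as [Hlo Hhi].
  assert (Hnonneg : (-1 < Int_part x)%Z) by (apply lt_IZR; lra).
  unfold nat_floor. rewrite INR_IZR_INZ, Z2Nat.id by lia. lra.
Qed.

Definition ring_index (s : R) (r p : pt) : nat := nat_floor (2 * dist2 p r / s - 1).

Lemma ring_index_spec (s : R) (r p : pt) : 0 < s -> s / 2 < dist2 p r ->
  INR (S (ring_index s r p)) * (s / 2) <= dist2 p r < INR (S (S (ring_index s r p))) * (s / 2).
Proof.
  intros Hs Hfar. unfold ring_index.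
  assert (Hx : 0 <= 2 * dist2 p r / s - 1).
  { apply Rmult_lt_compat_r with (r := 2 / s) in Hfar; [|apply Rdiv_lt_0_compat; lra].
    replace (s / 2 * (2 / s)) with 1 in Hfar by (field; lra).
    replace (dist2 p r * (2 / s)) with (2 * dist2 p r / s) in Hfar by (field; lra). lra. }
  destruct (nat_floor_spec _ Hx) as [Hlo Hhi].
  set (k := nat_floor (2 * dist2 p r / s - 1)) in *. rewrite !S_INR.
  replace (dist2 p r) with ((2 * dist2 p r / s - 1 + 1) * (s / 2)) by (field; lra).
  split; apply Rmult_le_compat_r || apply Rmult_lt_compat_r; lra.
Qed.

Lemma sum_n_ring_capacity (j : nat) :
  sum_n (fun k => 6 * INR (S k) + 3) j = INR (3 * S (S j) * S (S j) - 3).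
Proof.
  rewrite minus_INR by lia. rewrite !mult_INR.
  induction j as [|j IH].
  - rewrite sum_O. simpl. lra.
  - rewrite sum_Sn, IH. change plus with Rplus. rewrite !S_INR. simpl. lra.
Qed.

Lemma ring_weight_eq (alpha s : R) (j : nat) : 0 < s ->
  (6 * INR (S j) + 3) * / Rpower (INR (S j) * (s / 2)) alpha
  = Rpower (2 / s) alpha * tau_term alpha j.
Proof.
  intros Hs. unfold tau_term. set (x := INR (S j)).
  assert (Hx : 0 < x) by apply lt_0_INR, Nat.lt_0_succ.
  rewrite <- Rpower_mult_distr by lra.
  assert (Hinv : Rpower (2 / s) alpha = / Rpower (s / 2) alpha).
  { replace (2 / s) with (/ (s / 2)) by (field; lra). unfold Rpower.
    rewrite ln_Rinv, <- exp_Ropp by lra. f_equal. ring. }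
  assert (Hxa : Rpower x alpha = Rpower x (alpha - 1) * x).
  { rewrite <- (Rpower_1 x) at 3 by exact Hx. rewrite <- Rpower_plus. f_equal. ring. }
  assert (P1 := Rpower_pos x (alpha - 1)). assert (P2 := Rpower_pos (s / 2) alpha).
  rewrite Hinv, Hxa. field. lra.
Qed.

Lemma count_le_ring_index (s : R) (r : pt) (T : list pt) (j : nat) :
  0 < s -> NoDup T -> separated s T -> (forall p, In p T -> s / 2 < dist2 p r) ->
  INR (count_le j (map (ring_index s r) T)) <= sum_n (fun k => 6 * INR (S k) + 3) j.
Proof.
  intros Hs Hnd Hsep Hfar.
  unfold count_le. rewrite filter_map_swap, length_map, sum_n_ring_capacity.
  apply le_INR, (separated_disc_packing r s); [lra | lia | apply NoDup_filter, Hnd | |].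
  - intros u v Hu Hv. apply filter_In in Hu as [Hu _]. apply filter_In in Hv as [Hv _]. auto.
  - intros p Hp. apply filter_In in Hp as [Hp Hj]. apply Nat.leb_le in Hj.
    destruct (ring_index_spec s r p Hs (Hfar p Hp)) as [_ Hhi].
    eapply Rlt_le_trans; [exact Hhi|].
    replace (INR (S (S j)) * s / 2) with (INR (S (S j)) * (s / 2)) by (unfold Rdiv; ring).
    apply Rmult_le_compat_r; [lra | apply le_INR; lia].
Qed.

Lemma sum_eta_separated_le (alpha s : R) (r : pt) (T : list pt) :
  2 < alpha -> 0 < s -> NoDup T -> separated s T ->
  (forall p, In p T -> s / 2 < dist2 p r) ->
  sumR (map (fun p => eta_alpha alpha (dist2 p r)) T)
  <= Rpower (2 / s) alpha * Series (tau_term alpha).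
Proof.
  intros Halpha Hs Hnd Hsep Hfar.
  set (ring := ring_index s r).
  set (g := fun j : nat => / Rpower (INR (S j) * (s / 2)) alpha).
  set (c := fun j : nat => 6 * INR (S j) + 3).
  assert (Hg_pos : forall j, 0 <= g j) by (intros j; left; apply Rinv_0_lt_compat, Rpower_pos).
  assert (Hg_antitone : forall j, g (S j) <= g j).
  { intros j. apply Rinv_le_contravar; [apply Rpower_pos|].
    apply Rle_Rpower_l; [lra|]. split.
    - apply Rmult_lt_0_compat; [apply lt_0_INR; lia | lra].
    - apply Rmult_le_compat_r; [lra | apply le_INR; lia]. }
  assert (Heta_ring : forall p, In p T -> eta_alpha alpha (dist2 p r) <= g (ring p)).
  { intros p Hp. destruct (ring_index_spec s r p Hs (Hfar p Hp)) as [Hlo _].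
    change (ring_index s r) with ring in Hlo. pose proof (dist2_nonneg p r).
    apply Rinv_le_contravar; [apply Rpower_pos|].
    apply Rle_Rpower_l; [lra|]. split; [|lra].
    apply Rmult_lt_0_compat; [apply lt_0_INR; lia | lra]. }
  assert (Hcount : forall j, INR (count_le j (map ring T)) <= sum_n c j)
    by (intros j; apply count_le_ring_index; assumption).
  set (K := list_max (map ring T)).
  assert (HK : forall k, In k (map ring T) -> (k <= K)%nat).
  { apply Forall_forall, list_max_le, Nat.le_refl. }
  apply Rle_trans with (sumR (map g (map ring T))).
  { rewrite map_map. apply sumR_map_le, Heta_ring. }
  eapply Rle_trans; [apply (sumR_map_le_capacity c g Hg_pos Hg_antitone K); assumption|].
  rewrite (sum_n_ext _ (fun j => Rpower (2 / s) alpha * tau_term alpha j))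
    by (intros j; apply ring_weight_eq, Hs).
  rewrite (sum_n_mult_l (K := R_AbsRing)). apply Rmult_le_compat_l; [left; apply Rpower_pos|].
  apply sum_n_le_Series; [intros n; left; apply tau_term_pos | apply ex_series_tau_term, Halpha].
Qed.

Lemma interference_sumR (T : list pt) (r : pt) (P : R) (eta : R -> R) :
  interference T r P eta = P * sumR (map (fun p => eta (dist2 p r)) T).
Proof. induction T as [|a T IH]; simpl; [ring|]. rewrite IH. ring. Qed.

Lemma power_for_ratio (beta No E Q : R) :
  0 < beta -> 0 < No -> 0 <= Q -> beta * Q < E ->
  exists P, 0 < P /\
    forall sig I, E <= sig -> 0 <= I <= Q -> P * sig / (No + P * I) >= beta.
Proof.
  intros Hbeta HNo HQ Hgap.
  set (P := beta * No / (E - beta * Q) + 1).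
  assert (HPgap : beta * No <= P * (E - beta * Q)).
  { unfold P. rewrite Rmult_plus_distr_r. unfold Rdiv.
    rewrite Rmult_assoc, Rinv_l by lra. lra. }
  assert (HP : 0 < P).
  { unfold P. assert (0 < beta * No / (E - beta * Q)) by (apply Rdiv_lt_0_compat; nra). lra. }
  exists P. split; [exact HP|]. intros sig I Hsig [HI0 HIQ].
  apply Rle_ge, (Rmult_le_reg_r (No + P * I)); [nra|].
  unfold Rdiv. rewrite Rmult_assoc, Rinv_l by nra.
  assert (0 <= beta * P * (Q - I)) by (apply Rmult_le_pos; nra).
  assert (0 <= P * (sig - E)) by (apply Rmult_le_pos; lra).
  nra.
Qed.

(* The condition on tau raised to the power alpha: beta times the interference
   bound of sum_eta_separated_le stays below the weakest signal. *)
Lemma tau_gap (alpha beta Sig s C : R) :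
  0 < alpha -> 0 < beta -> 0 < Sig -> 0 < s -> 0 < C ->
  2 * Rpower Sig (1 / alpha) * Rpower beta (1 / alpha) * (1 + C) < s ->
  beta * (Rpower (2 / s) alpha * Sig) < / Rpower (1 + C) alpha.
Proof.
  intros Halpha Hbeta HSig Hs HC Hlt.
  assert (Hpos := Rpower_pos).
  apply ln_increasing in Hlt; [|repeat apply Rmult_lt_0_compat; try apply Hpos; lra].
  apply ln_lt_inv; [repeat apply Rmult_lt_0_compat; try apply Hpos; lra
                   | apply Rinv_0_lt_compat, Hpos |].
  rewrite !ln_mult, !ln_Rpower in Hlt by (repeat apply Rmult_lt_0_compat; try apply Hpos; lra).
  rewrite ln_Rinv, !ln_mult, !ln_Rpower by (repeat apply Rmult_lt_0_compat; try apply Hpos; lra).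
  replace (ln (2 / s)) with (ln 2 - ln s) by (unfold Rdiv; rewrite ln_mult, ln_Rinv by
    (try apply Rinv_0_lt_compat; lra); lra).
  apply (Rmult_lt_compat_l alpha) in Hlt; [|exact Halpha].
  replace (alpha * (ln 2 + 1 / alpha * ln Sig + 1 / alpha * ln beta + ln (1 + C)))
    with (alpha * ln 2 + ln Sig + ln beta + alpha * ln (1 + C)) in Hlt by (field; lra).
  lra.
Qed.

Lemma ensures_SINR_of_tau (alpha beta No C D : R) :
  2 < alpha -> 0 < beta -> 0 < No -> 0 < C -> 0 < D ->
  tau alpha * Rpower beta (1 / alpha) * (1 + C) < C * (2 + D) ->
  ensures_SINR C D beta No (eta_alpha alpha).
Proof.
  intros Halpha Hbeta HNo HC HD Htau.
  set (s := C * (2 + D)) in *.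
  assert (Hs : 2 * C < s) by (unfold s; nra).
  set (Sig := Series (tau_term alpha)).
  assert (HSig : 0 < Sig) by (apply Series_tau_term_pos, Halpha).
  rewrite tau_Series in Htau by exact Halpha. fold Sig in Htau.
  assert (Hgap := tau_gap alpha beta Sig s C ltac:(lra) Hbeta HSig ltac:(lra) HC Htau).
  destruct (power_for_ratio beta No (/ Rpower (1 + C) alpha) (Rpower (2 / s) alpha * Sig)
              Hbeta HNo ltac:(left; apply Rmult_lt_0_compat; [apply Rpower_pos | exact HSig]) Hgap)
    as [P [HP Hratio]].
  exists P. split; [exact HP|].
  intros t r T Hnd [Htr Hsep]. fold s in Hsep. inversion Hnd as [|? ? Ht_T HndT]; subst.
  unfold SINR. rewrite interference_sumR. apply Hratio.
  - apply Rinv_le_contravar; [apply Rpower_pos|].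
    apply Rle_Rpower_l; [lra|]. pose proof (dist2_nonneg t r). lra.
  - split.
    + apply sumR_map_nonneg. intros p _. left. apply Rinv_0_lt_compat, Rpower_pos.
    + apply sum_eta_separated_le; auto; [lra| |].
      * intros u v Hu Hv Huv. apply Rge_le, Hsep; [right | right |]; auto.
      * intros p Hp.
        assert (Hpt : p <> t) by (intros ->; contradiction).
        assert (Hsp := Hsep p t (or_intror Hp) (or_introl eq_refl) Hpt).
        assert (Htri := dist2_triangle p r t). rewrite (dist2_sym r t) in Htri. lra.
Qed.

Theorem lemma2 (alpha beta : R) (Halpha : alpha > 2) (Hbeta : beta > 0) :
  (* (a) *)
  (forall No C D : R, No > 0 -> C > 0 -> D > 0 ->
     (1 + C) / (C * (2 + D)) < 1 / (tau alpha * Rpower beta (1 / alpha)) ->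
     ensures_SINR C D beta No (eta_alpha alpha)) /\
  (* (b) *)
  (forall C : R, C > 0 ->
     exists D : R, D > 0 /\
       forall No : R, No > 0 -> ensures_SINR C D beta No (eta_alpha alpha)) /\
  (* (c) *)
  (exists D : R, D > 0 /\ exists C0 : R,
     forall C : R, C >= C0 -> C > 0 ->
       forall No : R, No > 0 -> ensures_SINR C D beta No (eta_alpha alpha)).
Proof.
  set (Q := tau alpha * Rpower beta (1 / alpha)).
  assert (HQ : 0 < Q) by (repeat apply Rmult_lt_0_compat; try apply Rpower_pos; lra).
  split; [|split].
  - intros No C D HNo HC HD Hratio. apply ensures_SINR_of_tau; auto.
    assert (Hs : 0 < C * (2 + D)) by nra.
    apply (Rmult_lt_compat_r (C * (2 + D) * Q)) in Hratio; [|nra].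
    replace ((1 + C) / (C * (2 + D)) * (C * (2 + D) * Q)) with (Q * (1 + C)) in Hratio
      by (field; lra).
    replace (1 / Q * (C * (2 + D) * Q)) with (C * (2 + D)) in Hratio by (field; lra).
    exact Hratio.
  - intros C HC. exists (Q * (1 + C) / C). split; [apply Rdiv_lt_0_compat; nra|].
    intros No HNo. apply ensures_SINR_of_tau; try apply Rdiv_lt_0_compat; try nra.
    fold Q. replace (C * (2 + Q * (1 + C) / C)) with (2 * C + Q * (1 + C)) by (field; lra). lra.
  - exists (2 * Q). split; [lra|]. exists 1. intros C HC1 HC No HNo.
    apply ensures_SINR_of_tau; try lra. fold Q. nra.
Qed.
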